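(* Let $F_1,F_2:\mathbb{R}^n\rightrightarrows\mathbb{R}^p$ be nearly convex set-valued mappings with $\operatorname{ri}(\operatorname{dom} F_1)\cap\operatorname{ri}(\operatorname{dom} F_2)\neq\emptyset$. Then $$\operatorname{ri}\big(\operatorname{gph}(F_1+F_2)\big)=\{(x,y)\in\mathbb{R}^n\times\mathbb{R}^p: x\in\operatorname{ri}(\operatorname{dom} F_1)\cap\operatorname{ri}(\operatorname{dom} F_2),\ y\in\operatorname{ri} F_1(x)+\operatorname{ri} F_2(x)\}.$$
   Context: A set $\Omega\subset\mathbb{R}^k$ is nearly convex if there is a convex set $C$ with $C\subset\Omega\subset\overline{C}$. For an arbitrary set $\Omega$, $\operatorname{ri}\Omega=\{a\in\Omega:\exists\delta>0,\ B(a;\delta)\cap\operatorname{aff}\Omega\subset\Omega\}$. For $F:\mathbb{R}^n\rightrightarrows\mathbb{R}^p$: $\operatorname{dom} F=\{x:F(x)\neq\emptyset\}$, $\operatorname{gph} F=\{(x,y):y\in F(x)\}$; $F$ is nearly convex if $\operatorname{gph} F$ is nearly convex. $(F_1+F_2)(x)=F_1(x)+F_2(x)$ (Minkowski sum, empty if either summand is empty). *)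

(* R^k is modelled as 'rV[R]_k for R : realType,
   with the Euclidean norm; R^n x R^p is identified with R^(n+p) via row_mx. *)
From HB Require Import structures.
From mathcomp Require Import all_boot all_order all_algebra.
From mathcomp Require Import boolp classical_sets reals.
Set Implicit Arguments. Unset Strict Implicit. Unset Printing Implicit Defensive.
Import Order.TTheory GRing.Theory Num.Theory.
Local Open Scope ring_scope.
Local Open Scope classical_set_scope.

Section Defs.
Variable R : realType.

Definition enorm (k : nat) (v : 'rV[R]_k) : R := Num.sqrt (\sum_(i < k) v 0 i ^+ 2).

Definition eball (k : nat) (a : 'rV[R]_k) (d : R) : set 'rV[R]_k :=
  [set x | enorm (x - a) < d].

Definition eclosure (k : nat) (C : set 'rV[R]_k) : set 'rV[R]_k :=
  [set x | forall e : R, 0 < e -> exists c, C c /\ enorm (c - x) < e].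

Definition convex_set (k : nat) (C : set 'rV[R]_k) : Prop :=
  forall x y t, C x -> C y -> 0 <= t -> t <= 1 -> C (t *: x + (1 - t) *: y).

Definition nearly_convex (k : nat) (Om : set 'rV[R]_k) : Prop :=
  exists C, convex_set C /\ C `<=` Om /\ Om `<=` eclosure C.

Definition aff (k : nat) (Om : set 'rV[R]_k) : set 'rV[R]_k :=
  [set x | exists (m : nat) (pts : 'I_m -> 'rV[R]_k) (w : 'I_m -> R),
      (forall i, Om (pts i)) /\ \sum_(i < m) w i = 1 /\
      x = \sum_(i < m) w i *: pts i].

Definition ri (k : nat) (Om : set 'rV[R]_k) : set 'rV[R]_k :=
  [set a | Om a /\ exists d : R, 0 < d /\ eball a d `&` aff Om `<=` Om].

Definition dom (n p : nat) (F : 'rV[R]_n -> set 'rV[R]_p) : set 'rV[R]_n :=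
  [set x | F x !=set0].

Definition gph (n p : nat) (F : 'rV[R]_n -> set 'rV[R]_p) : set 'rV[R]_(n + p) :=
  [set z | exists x y, z = row_mx x y /\ F x y].

Definition nearly_convex_map (n p : nat) (F : 'rV[R]_n -> set 'rV[R]_p) : Prop :=
  nearly_convex (gph F).

Definition msum (p : nat) (A B : set 'rV[R]_p) : set 'rV[R]_p :=
  [set y | exists y1 y2, A y1 /\ B y2 /\ y = y1 + y2].

Definition sum_map (n p : nat) (F1 F2 : 'rV[R]_n -> set 'rV[R]_p) : 'rV[R]_n -> set 'rV[R]_p :=
  fun x => msum (F1 x) (F2 x).

End Defs.

From HB Require Import structures.
From mathcomp Require Import all_boot all_order all_algebra.
From mathcomp Require Import boolp classical_sets reals.
From mathcomp Require Import ring lra.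
Import Order.TTheory GRing.Theory Num.Theory.
Local Open Scope ring_scope.
Local Open Scope classical_set_scope.
Set Implicit Arguments. Unset Strict Implicit. Unset Printing Implicit Defensive.

(* Fixing z0 ∈ C and a
   matrix B whose rows z0 + row i B lie in C and span every direction c - z0
   (c ∈ C), the relative interior of Om consists exactly of the points z ∈ C
   such that z + v ∈ C for all small v in the row space of B.

   The
   two inclusions of the theorem are proved separately, both by prolonging
   through points of the relative interiors and retracting along segments. *)

Section Euclid.
Variable R : realType.

Definition sqnorm (k : nat) (v : 'rV[R]_k) : R := \sum_(i < k) v 0 i ^+ 2.

Lemma sqnorm_ge0 k (v : 'rV[R]_k) : 0 <= sqnorm v.
Proof. by apply: sumr_ge0 => i _; rewrite sqr_ge0. Qed.

Lemma enorm_ge0 k (v : 'rV[R]_k) : 0 <= enorm v.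
Proof. exact: sqrtr_ge0. Qed.

Lemma enorm_coord k (v : 'rV[R]_k) i : `|v 0 i| <= enorm v.
Proof.
rewrite /enorm -sqrtr_sqr ler_wsqrtr // (bigD1 i) //= lerDl.
by apply: sumr_ge0 => j _; rewrite sqr_ge0.
Qed.

Lemma enormZ k a (v : 'rV[R]_k) : enorm (a *: v) = `|a| * enorm v.
Proof.
rewrite /enorm -sqrtr_sqr -sqrtrM ?sqr_ge0 // mulr_sumr.
by congr Num.sqrt; apply: eq_bigr => i _; rewrite mxE exprMn.
Qed.

Lemma enormB k (u v : 'rV[R]_k) : enorm (u - v) = enorm (v - u).
Proof. by rewrite -opprB -scaleN1r enormZ normrN normr1 mul1r. Qed.

Lemma enorm0 k : enorm (0 : 'rV[R]_k) = 0.
Proof. by rewrite -(scale0r 0) enormZ normr0 mul0r. Qed.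

(* A weak triangle inequality; the constant 2 is harmless for all our
   epsilon-arguments and avoids Cauchy-Schwarz. *)
Lemma enormD_le2 k (u v : 'rV[R]_k) : enorm (u + v) <= 2 * (enorm u + enorm v).
Proof.
have h0 : 0 <= 2 * (enorm u + enorm v) by rewrite mulr_ge0 ?addr_ge0 ?enorm_ge0.
rewrite /enorm -(ger0_norm h0) -sqrtr_sqr ler_wsqrtr //.
have sq_sum : \sum_(i < k) (u + v) 0 i ^+ 2 <= 2 * (sqnorm u + sqnorm v).
  rewrite /sqnorm -big_split mulr_sumr /=; apply: ler_sum => i _; rewrite mxE.
  set a := u 0 i; set b := v 0 i; have := sqr_ge0 (a - b); nra.
apply: (le_trans sq_sum).
have eu : enorm u ^+ 2 = sqnorm u by rewrite /enorm sqr_sqrtr ?sqnorm_ge0.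
have ev : enorm v ^+ 2 = sqnorm v by rewrite /enorm sqr_sqrtr ?sqnorm_ge0.
have pu := enorm_ge0 u; have pv := enorm_ge0 v.
rewrite -eu -ev; nra.
Qed.

Lemma sqnorm_row_mx n p (x : 'rV[R]_n) (y : 'rV[R]_p) :
  sqnorm (row_mx x y) = sqnorm x + sqnorm y.
Proof.
rewrite /sqnorm big_split_ord /=; congr (_ + _); apply: eq_bigr => i _.
  by rewrite row_mxEl.
by rewrite row_mxEr.
Qed.

Lemma enorm_row_mxl n p (x : 'rV[R]_n) (y : 'rV[R]_p) :
  enorm x <= enorm (row_mx x y).
Proof.
rewrite /enorm ler_wsqrtr //.
by rewrite (sqnorm_row_mx x y : \sum_(i < n + p) _ = _) lerDl sqnorm_ge0.
Qed.

Lemma enorm_row_mx0 n p (y : 'rV[R]_p) : enorm (row_mx (0 : 'rV[R]_n) y) = enorm y.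
Proof.
rewrite /enorm (sqnorm_row_mx 0 y : \sum_(i < n + p) _ = _) /sqnorm big1 ?add0r //.
by move=> i _; rewrite mxE expr0n.
Qed.

(* Entrywise l1-norm of a matrix: a Lipschitz constant for v |-> v *m M,
   used to control the coordinates of small vectors in a spanning family. *)
Definition l1norm k m (M : 'M[R]_(k, m)) : R := \sum_j \sum_i `|M j i|.

Lemma l1norm_ge0 k m (M : 'M[R]_(k, m)) : 0 <= l1norm M.
Proof. by apply: sumr_ge0 => j _; apply: sumr_ge0 => i _. Qed.

Lemma mulmx_coord_le k m (v : 'rV[R]_k) (M : 'M[R]_(k, m)) e i :
  enorm v <= e -> `|(v *m M) 0 i| <= e * l1norm M.
Proof.
move=> ve; rewrite mxE; apply: (le_trans (ler_norm_sum _ _ _)).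
rewrite /l1norm mulr_sumr; apply: ler_sum => j _.
rewrite normrM; apply: ler_pM => //; first exact: le_trans (enorm_coord _ _) ve.
by rewrite (bigD1 i) //= lerDl; apply: sumr_ge0.
Qed.

Lemma eq0_of_small (x K : R) : 0 <= K -> (forall e, 0 < e -> `|x| <= e * K) -> x = 0.
Proof.
move=> K0 H; apply/eqP; apply/negPn/negP => nx.
have hx : 0 < `|x| by rewrite normr_gt0.
have := H (`|x| / (K + 1)) (divr_gt0 hx (ltr_wpDl K0 ltr01)).
rewrite mulrAC ler_pdivlMr ?ltr_wpDl //; nra.
Qed.

Lemma submxB m1 m2 k (A B : 'M[R]_(m1, k)) (C : 'M[R]_(m2, k)) :
  (A <= C)%MS -> (B <= C)%MS -> ((A - B)%R <= C)%MS.
Proof. by move=> hA hB; apply: addmx_sub => //; rewrite -scaleN1r scalemx_sub. Qed.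

Lemma retract_prolong k (a z : 'rV[R]_k) e : 0 < e ->
  a + (1 + e)^-1 *: (z + e *: (z - a) - a) = z.
Proof.
move=> e0; have ne : 1 + e != 0 by rewrite gt_eqF // addr_gt0.
have -> : z + e *: (z - a) - a = (1 + e) *: (z - a).
  by rewrite scalerDl scale1r addrAC.
by rewrite scalerA mulVf // scale1r addrC subrK.
Qed.

Lemma retract_coef_ge0 (e : R) : 0 < e -> 0 <= (1 + e)^-1.
Proof. by move=> e0; rewrite invr_ge0; lra. Qed.

Lemma retract_coef_lt1 (e : R) : 0 < e -> (1 + e)^-1 < 1.
Proof. by move=> e0; rewrite invf_lt1; lra. Qed.

Lemma ri_prolong k (Om : set 'rV[R]_k) z c : ri Om z -> Om c ->
  exists e, 0 < e /\ Om (z + e *: (z - c)).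
Proof.
move=> [Oz [d [d0 hd]]] Oc.
set E := enorm (z - c); have E0 : 0 <= E by exact: enorm_ge0.
set e := d / (2 * (E + 1)).
have e0 : 0 < e by rewrite divr_gt0 // mulr_gt0 // ltr_wpDl.
exists e; split => //; apply: hd; split.
  rewrite /eball /= addrC addKr enormZ ger0_norm ?ltW // -/E.
  rewrite /e mulrAC ltr_pdivrMr ?mulr_gt0 ?ltr_wpDl //; nra.
exists 2%N, (fun i : 'I_2 => if i == ord0 then z else c),
  (fun i : 'I_2 => if i == ord0 then 1 + e else - e).
split; first by move=> i; case: ifP.
rewrite !big_ord_recl !big_ord0 /=; split; first by ring.
by apply/rowP => j; rewrite !mxE; ring.
Qed.

Lemma convex_cone_comb k (C : set 'rV[R]_k) z0 : convex_set C -> C z0 ->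
  forall m (P : 'I_m -> 'rV[R]_k) (b : 'I_m -> R),
  (forall i, C (z0 + P i)) -> (forall i, 0 <= b i) -> \sum_i b i <= 1 ->
  C (z0 + \sum_i b i *: P i).
Proof.
move=> hC Cz0; elim=> [|m IH] P b CP b0 bs.
  by rewrite big_ord0 addr0.
rewrite big_ord_recl; move: bs; rewrite big_ord_recl => bs.
have S0 : 0 <= \sum_(i < m) b (lift ord0 i) by apply: sumr_ge0.
have b01 : b ord0 <= 1 by lra.
have [e1|ne1] := eqVneq (b ord0) 1.
  have Sz : \sum_(i < m) b (lift ord0 i) = 0.
    by apply/eqP; rewrite eq_le S0 andbT; lra.
  rewrite big1 ?addr0 ?e1 ?scale1r //.
  by move=> i _; rewrite (psumr_eq0P _ Sz) ?scale0r // => j _; exact: b0.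
have sp : 0 < 1 - b ord0 by rewrite subr_gt0 lt_neqAle ne1.
set s := 1 - b ord0 in sp.
have := IH (fun i => P (lift ord0 i)) (fun i => b (lift ord0 i) / s)
  (fun i => CP _) (fun i => divr_ge0 (b0 _) (ltW sp)).
rewrite -mulr_suml ler_pdivrMr // mul1r => /(_ ltac:(rewrite /s; lra)) Cw.
have := hC _ _ (b ord0) (CP ord0) Cw (b0 _) b01.
congr C; rewrite -/s scalerDr scalerDr scaler_sumr addrA.
have -> : s *: z0 = z0 - b ord0 *: z0 by rewrite /s scalerBl scale1r.
rewrite [_ + b ord0 *: P ord0 + _]addrAC [b ord0 *: z0 + _]addrC subrK -addrA.
congr (_ + (_ + _)); apply: eq_bigr => i _.
by rewrite scalerA mulrC -mulrA mulVf ?mulr1 // gt_eqF.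
Qed.

Section SpanInterior.
Variables (k m : nat) (C : set 'rV[R]_k) (z0 : 'rV[R]_k) (B : 'M[R]_(m, k)).
Hypotheses (convC : convex_set C) (Cz0 : C z0)
  (rowsC : forall i, C (z0 + row i B)) (spanC : forall c, C c -> (c - z0 <= B)%MS).

Definition span_int (z : 'rV[R]_k) : Prop := C z /\ exists e, 0 < e /\
  forall v, (v <= B)%MS -> enorm v < e -> C (z + v).

(* The row space of B is closed, so it still spans the directions of cl C. *)
Lemma closure_in_span b : eclosure C b -> (b - z0 <= B)%MS.
Proof.
move=> hb; rewrite submxE; apply/eqP/rowP => j; rewrite [RHS]mxE.
apply: (eq0_of_small (l1norm_ge0 (cokermx B))) => e e0.
have [c [Cc hc]] := hb e e0.
have h0 : (c - z0) *m cokermx B = 0 by apply/eqP; rewrite -submxE spanC.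
have -> : b - z0 = (b - c) + (c - z0) by rewrite addrA subrK.
rewrite mulmxDl h0 addr0; apply: mulmx_coord_le.
by rewrite enormB ltW.
Qed.

Lemma aff_in_span (Om : set 'rV[R]_k) : Om `<=` eclosure C ->
  forall w, aff Om w -> (w - z0 <= B)%MS.
Proof.
move=> OmC w [n [pts [wt [hp [hs ->]]]]].
have -> : \sum_i wt i *: pts i - z0 = \sum_i wt i *: (pts i - z0).
  rewrite -[z0 in LHS]scale1r -hs scaler_suml -sumrB.
  by apply: eq_bigr => i _; rewrite scalerBr.
by apply: summx_sub => i _; apply: scalemx_sub; apply: closure_in_span; apply: OmC.
Qed.

(* The barycentre-like point z0 + η Σ row i B is interior: small vectors of
   the row space have small coordinates on the rows of B. *)
Lemma span_int_nonempty : exists z, span_int z.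
Proof.
set eta : R := (2 * (m%:R + 1))^-1.
have m0 : 0 <= m%:R :> R by rewrite ler0n.
have eta0 : 0 < eta by rewrite invr_gt0 mulr_gt0 // ltr_wpDl.
have etaE : eta * (2 * (m%:R + 1)) = 1.
  by rewrite mulVf // gt_eqF // mulr_gt0 // ltr_wpDl.
set K := l1norm (pinvmx B); have K0 : 0 <= K by exact: l1norm_ge0.
have eK0 : 0 < eta / (K + 1) by rewrite divr_gt0 // ltr_wpDl.
suff H : forall v, (v <= B)%MS -> enorm v < eta / (K + 1) ->
    C (z0 + \sum_i eta *: row i B + v).
  exists (z0 + \sum_i eta *: row i B); split; last by exists (eta / (K + 1)).
  by have := H 0 (sub0mx _ _); rewrite enorm0 addr0; apply.
move=> v vB hv; set a := v *m pinvmx B.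
have vE : v = \sum_i a 0 i *: row i B by rewrite -mulmx_sum_row mulmxKpV.
have a_small : forall i, `|a 0 i| <= eta.
  move=> i; apply: (le_trans (mulmx_coord_le _ _ (ltW hv))).
  by rewrite mulrAC ler_pdivrMr ?ltr_wpDl // -/K; nra.
rewrite [X in _ + X]vE -addrA -big_split /=.
under eq_bigr do rewrite -scalerDl.
apply: convex_cone_comb => //.
  by move=> i; have := a_small i; rewrite ler_norml => /andP[]; lra.
apply: (@le_trans _ _ (\sum_(i < m) (2 * eta))).
  by apply: ler_sum => i _; have := a_small i; rewrite ler_norml => /andP[]; lra.
rewrite sumr_const card_ord -mulr_natr; nra.
Qed.

Lemma span_int_segment a b t : span_int a -> eclosure C b -> 0 <= t -> t < 1 ->
  span_int (a + t *: (b - a)).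
Proof.
move=> [Ca [e [e0 he]]] hb t0 t1.
have s0 : 0 < 1 - t by lra.
have d0 : 0 < (1 - t) * e / 4 by rewrite divr_gt0 ?mulr_gt0.
suff H : forall v, (v <= B)%MS -> enorm v < (1 - t) * e / 4 ->
    C (a + t *: (b - a) + v).
  split; last by exists ((1 - t) * e / 4).
  by have := H 0 (sub0mx _ _); rewrite enorm0 addr0; apply.
move=> v vB hv.
have [c [Cc hc]] := hb _ d0.
set w := t *: (b - c) + v.
have bcB : (b - c <= B)%MS.
  have -> : b - c = (b - z0) - (c - z0) by apply/rowP => j; rewrite !mxE; ring.
  by apply: submxB; [apply: closure_in_span | apply: spanC].
have wB : (w <= B)%MS by apply: addmx_sub => //; apply: scalemx_sub.
have w_small : enorm w < (1 - t) * e.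
  have := enormD_le2 (t *: (b - c)) v; rewrite enormZ ger0_norm // enormB -/w.
  have := enorm_ge0 (c - b); have := enorm_ge0 v; nra.
have Cq : C (a + (1 - t)^-1 *: w).
  apply: he; first exact: scalemx_sub.
  by rewrite enormZ ger0_norm ?invr_ge0 ?ltW // mulrC ltr_pdivrMr // mulrC.
have := convC Cc Cq t0 (ltW t1).
congr C; rewrite scalerDr scalerA mulfV ?gt_eqF // scale1r /w.
by apply/rowP => j; rewrite !mxE; ring.
Qed.

Variable Om : set 'rV[R]_k.
Hypotheses (COm : C `<=` Om) (OmC : Om `<=` eclosure C).

Lemma span_int_ri z : span_int z -> ri Om z.
Proof.
move=> [Cz [e [e0 he]]]; split; first exact: COm.
exists e; split => // w [hw aw].
have wz : (w - z <= B)%MS.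
  have -> : w - z = (w - z0) - (z - z0) by apply/rowP => j; rewrite !mxE; ring.
  by apply: submxB; [apply: (aff_in_span OmC) | apply: spanC].
by have := he _ wz hw; rewrite addrC subrK; apply: COm.
Qed.

(* Conversely, prolong z beyond an interior point a and retract along the
   segment from a: the line segment principle returns z as interior. *)
Lemma ri_span_int z : ri Om z -> span_int z.
Proof.
move=> rz; have [a ra] := span_int_nonempty.
have [e [e0 hO]] := ri_prolong rz (COm ra.1).
have := span_int_segment ra (OmC hO) (retract_coef_ge0 e0) (retract_coef_lt1 e0).
by rewrite retract_prolong.
Qed.

End SpanInterior.

(* A spanning matrix exists: take rows z0 + row i B ∈ C of maximal rank. *)
Lemma spanning_matrix k (C : set 'rV[R]_k) (z0 : 'rV[R]_k) : C z0 ->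
  exists m (B : 'M[R]_(m, k)), (forall i, C (z0 + row i B)) /\
    (forall c, C c -> (c - z0 <= B)%MS).
Proof.
move=> Cz0.
pose P : pred nat := fun r => `[< exists m (B : 'M[R]_(m, k)),
  (forall i, C (z0 + row i B)) /\ \rank B = r >].
have exP : exists r, P r.
  exists 0%N; apply/asboolP; exists 0%N, 0; split; first by case.
  by apply/eqP; rewrite -leqn0 rank_leq_row.
have ubP : forall r, P r -> (r <= k)%N.
  by move=> r /asboolP [m [B [_ <-]]]; apply: rank_leq_col.
case: (ex_maxnP exP ubP) => r /asboolP [m [B [hB hr]]] max.
exists m, B; split => // c Cc; apply/negPn/negP => nc.
pose B' := col_mx B (c - z0).
have hB' : forall i, C (z0 + row i B').
  move=> i; rewrite -(splitK i); case: (split i) => j /=; first by rewrite rowKu.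
  rewrite rowKd.
  have -> : row j (c - z0) = c - z0 by apply/rowP => l; rewrite mxE (ord1 j).
  by rewrite addrC subrK.
have sub : (B <= B')%MS by rewrite -addsmxE addsmxSl.
have lt : (\rank B < \rank B')%N.
  by rewrite (ltn_leqif (mxrank_leqif_sup sub)) col_mx_sub negb_and nc orbT.
have := max (\rank B') (asboolT (ex_intro _ (m + 1)%N (ex_intro _ B' (conj hB' erefl)))).
by rewrite -hr leqNgt lt.
Qed.

Lemma ri_eq_span_int k (C Om : set 'rV[R]_k) : convex_set C -> C `<=` Om ->
  Om `<=` eclosure C -> Om !=set0 ->
  exists m (z0 : 'rV[R]_k) (B : 'M[R]_(m, k)), C z0 /\
    (forall i, C (z0 + row i B)) /\ (forall c, C c -> (c - z0 <= B)%MS) /\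
    forall z, ri Om z <-> span_int C B z.
Proof.
move=> convC COm OmC [x0 Ox0].
have [z0 [Cz0 _]] := OmC _ Ox0 1 ltr01.
have [m [B [rowsC spanC]]] := spanning_matrix Cz0.
exists m, z0, B; split; [done | split; [done | split; [done | move=> z; split]]].
- exact: (ri_span_int convC Cz0 rowsC spanC COm OmC).
- exact: (span_int_ri spanC COm OmC).
Qed.

Lemma ri_subset k (Om : set 'rV[R]_k) : ri Om `<=` Om.
Proof. by move=> z []. Qed.

Lemma ri_in_core k (C Om : set 'rV[R]_k) z : convex_set C -> C `<=` Om ->
  Om `<=` eclosure C -> ri Om z -> C z.
Proof.
move=> convC COm OmC rz.
have [m [z0 [B [_ [_ [_ riE]]]]]] := ri_eq_span_int convC COm OmC (ex_intro _ z (ri_subset rz)).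
by have [] := (riE z).1 rz.
Qed.

Lemma ri_nonempty k (Om : set 'rV[R]_k) : nearly_convex Om -> Om !=set0 -> ri Om !=set0.
Proof.
move=> [C [convC [COm OmC]]] Om0.
have [m [z0 [B [Cz0 [rowsC [_ riE]]]]]] := ri_eq_span_int convC COm OmC Om0.
have [a ra] := span_int_nonempty convC Cz0 rowsC.
by exists a; apply/riE.
Qed.

Lemma ri_segment k (Om : set 'rV[R]_k) a b t : nearly_convex Om -> ri Om a -> Om b ->
  0 <= t -> t < 1 -> ri Om (a + t *: (b - a)).
Proof.
move=> [C [convC [COm OmC]]] ra Ob t0 t1.
have [m [z0 [B [_ [_ [spanC riE]]]]]] :=
  ri_eq_span_int convC COm OmC (ex_intro _ b Ob).
apply/riE; apply: (span_int_segment convC spanC) => //; last exact: OmC.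
exact/riE.
Qed.

(* Converse of prolongation: if the segment from a point a of ri Om to z
   extends beyond z inside Om, then z lies in ri Om (it is interior to a
   segment issued from a). *)
Lemma ri_of_prolong k (Om : set 'rV[R]_k) a z e : nearly_convex Om -> ri Om a ->
  0 < e -> Om (z + e *: (z - a)) -> ri Om z.
Proof.
move=> ncOm ra e0 Oz.
have := ri_segment ncOm ra Oz (retract_coef_ge0 e0) (retract_coef_lt1 e0).
by rewrite retract_prolong.
Qed.

Lemma ri_of_prolongs k (Om : set 'rV[R]_k) z : nearly_convex Om -> Om z ->
  (forall c, Om c -> exists e, 0 < e /\ Om (z + e *: (z - c))) -> ri Om z.
Proof.
move=> ncOm Oz prol; have [a ra] := ri_nonempty ncOm (ex_intro _ z Oz).
have [e [e0 Oe]] := prol a (ri_subset ra).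
exact: ri_of_prolong ncOm ra e0 Oe.
Qed.

Lemma prolong_shorten k (Om : set 'rV[R]_k) z c e1 e : nearly_convex Om -> ri Om z ->
  0 < e -> e <= e1 -> Om (z + e1 *: (z - c)) -> Om (z + e *: (z - c)).
Proof.
move=> ncOm rz e0 ee1 O1.
have e10 : 0 < e1 by apply: lt_le_trans ee1.
have [->|ne] := eqVneq e e1; first by [].
have t0 : 0 <= e / e1 by rewrite divr_ge0 // ltW.
have t1 : e / e1 < 1 by rewrite ltr_pdivrMr // mul1r lt_neqAle ne.
have := ri_subset (ri_segment ncOm rz O1 t0 t1).
by congr Om; apply/rowP => j; rewrite !mxE; field; lra.
Qed.

Section Maps.
Variables (n p : nat).
Implicit Types (F G : 'rV[R]_n -> set 'rV[R]_p).

Lemma gph_row_mx F x y : gph F (row_mx x y) <-> F x y.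
Proof.
split; last by move=> h; exists x, y.
by move=> [x' [y' [/eq_row_mx [-> ->] h]]].
Qed.

Lemma row_mx_affine (x x1 x2 : 'rV[R]_n) (y y1 y2 : 'rV[R]_p) e :
  row_mx x y + e *: (row_mx x1 y1 - row_mx x2 y2) =
  row_mx (x + e *: (x1 - x2)) (y + e *: (y1 - y2)).
Proof. by rewrite opp_row_mx add_row_mx scale_row_mx add_row_mx. Qed.

Lemma row_mx_sum m (f : 'I_m -> 'rV[R]_n) (g : 'I_m -> 'rV[R]_p) :
  \sum_i row_mx (f i) (g i) = row_mx (\sum_i f i) (\sum_i g i).
Proof.
apply/rowP => j; rewrite -(splitK j); case: (split j) => j' /=.
  by rewrite row_mxEl !summxE; apply: eq_bigr => i _; rewrite row_mxEl.
by rewrite row_mxEr !summxE; apply: eq_bigr => i _; rewrite row_mxEr.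
Qed.

(* Relative interior points of a graph are relatively interior in their
   fibre: the fibre {x} x F x embeds isometrically into gph F. *)
Lemma ri_gph_fiber F x y : ri (gph F) (row_mx x y) -> ri (F x) y.
Proof.
move=> [Gxy [d [d0 hd]]]; split; first exact/gph_row_mx.
exists d; split => // y' [hy [m [pts [w [hp [hs hE]]]]]].
apply/gph_row_mx; apply: hd; split.
  by rewrite /eball /= opp_row_mx add_row_mx subrr enorm_row_mx0.
exists m, (fun i => row_mx x (pts i)), w; split; first by move=> i; apply/gph_row_mx.
split => //; under eq_bigr do rewrite scale_row_mx.
by rewrite row_mx_sum -scaler_suml hs scale1r hE.
Qed.

Lemma dom_nearly_convex F : nearly_convex_map F -> nearly_convex (dom F).
Proof.
move=> [C [convC [CG GC]]].
exists [set x | exists y, C (row_mx x y)]; split; last split.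
- move=> x1 x2 t [y1 h1] [y2 h2] t0 t1; exists (t *: y1 + (1 - t) *: y2).
  by have := convC _ _ _ h1 h2 t0 t1; rewrite !scale_row_mx add_row_mx.
- by move=> x [y /CG /gph_row_mx Fxy]; exists y.
- move=> x [y Fxy] e e0.
  have [c [Cc hc]] := GC _ (proj2 (gph_row_mx F x y) Fxy) e e0.
  exists (lsubmx c); split; first by exists (rsubmx c); rewrite hsubmxK.
  apply: le_lt_trans hc; rewrite -[c in X in _ <= X]hsubmxK opp_row_mx add_row_mx.
  exact: enorm_row_mxl.
Qed.

(* Above each point of ri (dom F) lies a point of ri (gph F): retract, along
   a segment from a point of ri (gph F), a prolongation in the domain. *)
Lemma ri_gph_over_ri_dom F x : nearly_convex_map F -> ri (dom F) x ->
  exists w, ri (gph F) (row_mx x w).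
Proof.
move=> ncF rx; have [y0 Fy0] := ri_subset rx.
have [q rq] := ri_nonempty ncF (ex_intro _ _ (proj2 (gph_row_mx F x y0) Fy0)).
have [xq [yq [qE Fq]]] := ri_subset rq.
have [e [e0 [y' Fy']]] := ri_prolong rx (ex_intro _ yq Fq : dom F xq).
have := ri_segment ncF rq (proj2 (gph_row_mx F _ _) Fy')
  (retract_coef_ge0 e0) (retract_coef_lt1 e0).
by rewrite qE row_mx_affine retract_prolong //; exists (yq + (1 + e)^-1 *: (y' - yq)).
Qed.

Lemma ri_gph_of_fiber F x y : nearly_convex_map F -> ri (dom F) x -> ri (F x) y ->
  ri (gph F) (row_mx x y).
Proof.
move=> ncF rx ry; have [w rw] := ri_gph_over_ri_dom ncF rx.
have [e [e0 Fe]] := ri_prolong ry (proj1 (gph_row_mx F x w) (ri_subset rw)).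
apply: (ri_of_prolong ncF rw e0).
by rewrite row_mx_affine subrr scaler0 addr0; apply/gph_row_mx.
Qed.

Lemma ri_dom_of_ri_gph F G a x y : nearly_convex (dom F) -> dom G `<=` dom F ->
  ri (dom F) a -> dom G a -> ri (gph G) (row_mx x y) -> ri (dom F) x.
Proof.
move=> ncD GF ra [b Gab] rG.
have [e [e0]] := ri_prolong rG (proj2 (gph_row_mx G a b) Gab).
rewrite row_mx_affine => /gph_row_mx Ge.
exact: ri_of_prolong ncD ra e0 (GF _ (ex_intro _ _ Ge)).
Qed.

(* Pairs of points of C1 and C2 with the same first coordinate, added in the
   second coordinate: the convex kernel of the graph of a sum of maps. *)
Definition sum_kernel (C1 C2 : set 'rV[R]_(n + p)) : set 'rV[R]_(n + p) :=
  [set z | exists x u1 u2, z = row_mx x (u1 + u2) /\ C1 (row_mx x u1) /\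
    C2 (row_mx x u2)].

Lemma sum_kernel_convex C1 C2 : convex_set C1 -> convex_set C2 ->
  convex_set (sum_kernel C1 C2).
Proof.
move=> convC1 convC2 z z' t [x [u1 [u2 [-> [h1 h2]]]]] [x' [u1' [u2' [-> [h1' h2']]]]] t0 t1.
exists (t *: x + (1 - t) *: x'), (t *: u1 + (1 - t) *: u1'),
  (t *: u2 + (1 - t) *: u2'); split.
  rewrite !scale_row_mx add_row_mx; congr row_mx.
  by apply/rowP => j; rewrite !mxE; ring.
split.
  by have := convC1 _ _ _ h1 h1' t0 t1; rewrite !scale_row_mx add_row_mx.
by have := convC2 _ _ _ h2 h2' t0 t1; rewrite !scale_row_mx add_row_mx.
Qed.

(* A point
   (x, u1 + u2) of the graph is approached by moving both (x0, wi) ∈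
   ri (gph Fi) towards (x, ui) with the same parameter, which keeps the first
   coordinates equal while landing in ri (gph Fi) ⊆ Ci. *)
Lemma sum_map_nearly_convex F1 F2 x0 : nearly_convex_map F1 -> nearly_convex_map F2 ->
  ri (dom F1) x0 -> ri (dom F2) x0 -> nearly_convex_map (sum_map F1 F2).
Proof.
move=> nc1 nc2 r1 r2.
have [w1 rw1] := ri_gph_over_ri_dom nc1 r1.
have [w2 rw2] := ri_gph_over_ri_dom nc2 r2.
move: (nc1) (nc2) => [C1 [convC1 [CG1 GC1]]] [C2 [convC2 [CG2 GC2]]].
exists (sum_kernel C1 C2); split; last split.
- exact: sum_kernel_convex.
- move=> z [x [u1 [u2 [-> [/CG1/gph_row_mx h1 /CG2/gph_row_mx h2]]]]].
  by apply/gph_row_mx; exists u1, u2.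
- move=> z [x [y [-> [u1 [u2 [h1 [h2 ->]]]]]]] e e0.
  set E := enorm (row_mx x0 (w1 + w2) - row_mx x (u1 + u2)).
  have E0 : 0 <= E by exact: enorm_ge0.
  have D0 : 0 < e + E + 1 by rewrite -addrA addr_gt0 // ltr_wpDl.
  set s := e / (e + E + 1).
  have s0 : 0 < s by rewrite divr_gt0.
  have s1 : s < 1 by rewrite ltr_pdivrMr // mul1r; clear -E0; lra.
  have t0 : 0 <= 1 - s by clear -s1; lra.
  have t1 : 1 - s < 1 by clear -s0; lra.
  have q1 := ri_in_core convC1 CG1 GC1
    (ri_segment nc1 rw1 (proj2 (gph_row_mx _ _ _) h1) t0 t1).
  have q2 := ri_in_core convC2 CG2 GC2
    (ri_segment nc2 rw2 (proj2 (gph_row_mx _ _ _) h2) t0 t1).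
  rewrite row_mx_affine in q1; rewrite row_mx_affine in q2.
  eexists; split; first by do 3 eexists; split; [reflexivity | split; eassumption].
  have -> : row_mx (x0 + (1 - s) *: (x - x0))
      (w1 + (1 - s) *: (u1 - w1) + (w2 + (1 - s) *: (u2 - w2)))
      - row_mx x (u1 + u2) = s *: (row_mx x0 (w1 + w2) - row_mx x (u1 + u2)).
    rewrite !opp_row_mx !add_row_mx scale_row_mx; congr row_mx;
    by apply/rowP => j; rewrite !mxE; ring.
  rewrite enormZ ger0_norm ?ltW // -/E /s mulrAC ltr_pdivrMr //.
  by clear -E0 e0; nra.
Qed.

(* Inclusion ⊆ on fibres: with wi ∈ ri (Fi x), prolong (x, y) beyond
   (x, w1 + w2) inside the graph of the sum, split the prolonged value as
   v1 + v2, and retract each (x, wi) -> (x, vi) by the same parameter. *)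
Lemma ri_gph_sum_fiber F1 F2 x y : nearly_convex_map F1 -> nearly_convex_map F2 ->
  ri (dom F1) x -> ri (dom F2) x -> ri (gph (sum_map F1 F2)) (row_mx x y) ->
  msum (ri (F1 x)) (ri (F2 x)) y.
Proof.
move=> nc1 nc2 rx1 rx2 rz.
have [w1 rw1] := ri_gph_over_ri_dom nc1 rx1.
have [w2 rw2] := ri_gph_over_ri_dom nc2 rx2.
have Fw1 := proj1 (gph_row_mx _ _ _) (ri_subset rw1).
have Fw2 := proj1 (gph_row_mx _ _ _) (ri_subset rw2).
have Gw : gph (sum_map F1 F2) (row_mx x (w1 + w2)) by apply/gph_row_mx; exists w1, w2.
have [e [e0]] := ri_prolong rz Gw.
rewrite row_mx_affine subrr scaler0 addr0 => /gph_row_mx [v1 [v2 [Fv1 [Fv2 vE]]]].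
set t := (1 + e)^-1.
have retract F w v : nearly_convex_map F -> ri (gph F) (row_mx x w) -> F x v ->
    ri (F x) (w + t *: (v - w)).
  move=> ncF rw Fv; apply: (@ri_gph_fiber F x); rewrite -[x](addr0 x) -(scaler0 _ t).
  rewrite -(subrr x) -row_mx_affine.
  exact: ri_segment ncF rw (proj2 (gph_row_mx _ _ _) Fv)
    (retract_coef_ge0 e0) (retract_coef_lt1 e0).
exists (w1 + t *: (v1 - w1)), (w2 + t *: (v2 - w2)).
split; first exact: retract.
split; first exact: retract.
rewrite -(retract_prolong (w1 + w2) y e0) vE /t.
by apply/rowP => j; rewrite !mxE; ring.
Qed.

(* Inclusion ⊇: by the prolongation characterization, prolonging each
   (x, yi) ∈ ri (gph Fi) beyond a graph point (x', ui) by a common amount. *)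
Lemma ri_gph_sum_of_fibers F1 F2 x y1 y2 : nearly_convex_map F1 ->
  nearly_convex_map F2 -> nearly_convex_map (sum_map F1 F2) ->
  ri (dom F1) x -> ri (dom F2) x -> ri (F1 x) y1 -> ri (F2 x) y2 ->
  ri (gph (sum_map F1 F2)) (row_mx x (y1 + y2)).
Proof.
move=> nc1 nc2 ncG rx1 rx2 ry1 ry2.
have g1 := ri_gph_of_fiber nc1 rx1 ry1; have g2 := ri_gph_of_fiber nc2 rx2 ry2.
apply: (ri_of_prolongs ncG).
  by apply/gph_row_mx; exists y1, y2; split; [exact: ri_subset ry1 | split; [exact: ri_subset ry2|]].
move=> c [x' [y' [-> [u1 [u2 [Fu1 [Fu2 ->]]]]]]].
have [e1 [e10 he1]] := ri_prolong g1 (proj2 (gph_row_mx _ _ _) Fu1).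
have [e2 [e20 he2]] := ri_prolong g2 (proj2 (gph_row_mx _ _ _) Fu2).
set e := Order.min e1 e2.
have e0 : 0 < e by rewrite lt_min e10 e20.
have ee1 : e <= e1 by rewrite ge_min lexx.
have ee2 : e <= e2 by rewrite ge_min lexx orbT.
have k1 := prolong_shorten nc1 g1 e0 ee1 he1.
have k2 := prolong_shorten nc2 g2 e0 ee2 he2.
exists e; split => //.
move: k1 k2; rewrite !row_mx_affine => /gph_row_mx k1 /gph_row_mx k2.
apply/gph_row_mx; do 2 eexists; split; first exact: k1; split; first exact: k2.
by apply/rowP => j; rewrite !mxE; ring.
Qed.

End Maps.

End Euclid.

Theorem theorem3p7 (R : realType) (n p : nat) (F1 F2 : 'rV[R]_n -> set 'rV[R]_p) :
  nearly_convex_map F1 -> nearly_convex_map F2 ->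
  (ri (dom F1) `&` ri (dom F2)) !=set0 ->
  ri (gph (sum_map F1 F2)) =
  [set z | exists (x : 'rV[R]_n) (y : 'rV[R]_p), z = row_mx x y /\
     (ri (dom F1) `&` ri (dom F2)) x /\ msum (ri (F1 x)) (ri (F2 x)) y].
Proof.
move=> nc1 nc2 [x0 [r1 r2]].
have ncG := sum_map_nearly_convex nc1 nc2 r1 r2.
have domG0 : dom (sum_map F1 F2) x0.
  have [a1 Fa1] := ri_subset r1; have [a2 Fa2] := ri_subset r2.
  by exists (a1 + a2), a1, a2.
have domG1 : dom (sum_map F1 F2) `<=` dom F1 by move=> x [_ [y1 [_ [F1y1 _]]]]; exists y1.
have domG2 : dom (sum_map F1 F2) `<=` dom F2 by move=> x [_ [_ [y2 [_ [F2y2 _]]]]]; exists y2.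
apply/seteqP; split => z.
- move=> rz; have [x [y [zE _]]] := ri_subset rz; subst z.
  have rx1 := ri_dom_of_ri_gph (dom_nearly_convex nc1) domG1 r1 domG0 rz.
  have rx2 := ri_dom_of_ri_gph (dom_nearly_convex nc2) domG2 r2 domG0 rz.
  by exists x, y; split => //; split; [split | exact: ri_gph_sum_fiber].
- move=> [x [y [-> [[rx1 rx2] [y1 [y2 [ry1 [ry2 ->]]]]]]]].
  exact: ri_gph_sum_of_fibers.
Qed.
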